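(* Let $T$ be the BFS tree produced by temporal BFS on a temporal graph $G=(V,E)$ from source $s$ with starting time $t_s$, let $v\neq s$, and let $v_o$ be an occurrence of $v$ in $T$ with level $d$ and time $\tau$. Then $\tau$ is the earliest time at which $s$ can reach $v$ within $d$ hops starting from $t_s$, i.e. $\tau=\min\{t_{end}(P)\}$ where $P$ ranges over all temporal paths from $s$ to $v$ starting at or after $t_s$ with at most $d$ hops.
   Context: A temporal graph is a pair $G=(V,E)$ where $V$ is a finite set of vertices and $E$ is a finite set of temporal edges, i.e. triples $(u,v,t)$ with $u,v\in V$, $u\neq v$, $t\in\mathbb{R}$ (the time at which the edge is active); distinct elements of $E$ are distinct triples. Fix $t_s\in\mathbb{R}$ and $s\in V$. A temporal path from $x$ to $y$ (starting at or after $t_s$) is a sequence $P=\langle (w_1,w_2,t_1),\dots,(w_k,w_{k+1},t_k)\rangle$ of $k\ge1$ edges of $E$ with $w_1=x$, $w_{k+1}=y$ and $t_s\le t_1\le t_2\le\dots\le t_k$; its number of hops is $k$ and $t_{end}(P)=t_k$. Temporal BFS. Records are tuples $(x,d,\tau,p)$ (vertex $x$, level $d$, time $\tau$, predecessor record $p$ or none); every record ever created is an occurrence (node) of the BFS tree $T$, rooted at the initial record, with a tree edge from the predecessor record to the record; the level and time of an occurrence are the final values of its fields. For each $x\in V$ a current value $\sigma(x)$ is kept, initially $\infty$, and set to $\tau$ whenever a record of $x$ is created or its time is updated to $\tau$. Initially the FIFO queue $Q$ contains only $(s,0,t_s,\text{none})$ and $\sigma(s)=t_s$; no edge is traversed.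 While $Q\neq\emptyset$: pop the front record $R=(u,d_u,\sigma_u,p_u)$; let $B$ be the set of edges $(u,v,t)\in E$ not yet traversed with $\sigma_u\le t$; for each vertex $v$ such that $B$ contains an edge to $v$ (in any order), let $e=(u,v,t)$ be the edge of $B$ to $v$ with smallest $t$, mark $e$ traversed, and: (i) if $Q$ contains no record of $v$ and $\sigma(v)>t$, create $(v,d_u+1,t,R)$ and append it to $Q$; (ii) if $Q$ contains a record of $v$ with level $d_u+1$ and $\sigma(v)>t$, set that record's time to $t$ and predecessor to $R$; (iii) if $Q$ contains a record of $v$ but none with level $d_u+1$, and $\sigma(v)>t$, create $(v,d_u+1,t,R)$ and append it to $Q$. *)

From Stdlib Require Import Reals List Relations.
Import ListNotations.
Open Scope R_scope.

Section TBFS.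
Variable V : Type.

Definition edge : Type := (V * V * R)%type.
Definition esrc (e : edge) : V := fst (fst e).
Definition edst (e : edge) : V := snd (fst e).
Definition etime (e : edge) : R := snd e.

Definition temporal_graph (E : list edge) : Prop :=
  NoDup E /\ forall e, In e E -> esrc e <> edst e.

Fixpoint chain (x : V) (tprev : R) (P : list edge) (y : V) : Prop :=
  match P with
  | [] => x = y
  | e :: P' => esrc e = x /\ tprev <= etime e /\ chain (edst e) (etime e) P' y
  end.

Definition temporal_path (E : list edge) (ts : R) (x y : V) (P : list edge) : Prop :=
  P <> [] /\ (forall e, In e P -> In e E) /\ chain x ts P y.

Fixpoint tend (P : list edge) : R :=
  match P with
  | [] => 0
  | [e] => etime e
  | _ :: P' => tend P'
  end.

Definition is_min (A : R -> Prop) (m : R) : Prop :=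
  A m /\ forall x, A x -> m <= x.

(* BFS records (x, d, tau, p); p is the index of the predecessor record in
   the list of all records ever created. *)
Record brec : Type := mkRec { rv : V; rd : nat; rt : R; rp : option nat }.

Fixpoint upd (l : list brec) (j : nat) (r : brec) : list brec :=
  match l, j with
  | [], _ => []
  | _ :: l', O => r :: l'
  | x :: l', S j' => x :: upd l' j' r
  end.

(* Phase: Idle (between pops) or Busy processing a popped record r with
   fields (u, d_u, sigma_u), with the snapshot trav0 of traversed edges at
   pop time (defining B) and the list of target vertices already handled. *)
Inductive phase : Type :=
| Idle
| Busy (r : nat) (u : V) (du : nat) (su : R) (trav0 : list edge) (done : list V).

Record bstate : Type := mkState {
  recs : list brec;       (* all records ever created (the tree T) *)
  queue : list nat;       (* FIFO queue of record indices, front first *)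
  trav : list edge;
  sigma : V -> option R;  (* current value sigma(x); None = infinity *)
  ph : phase
}.

(* sigma(v) > t, with None = infinity *)
Definition sgt (o : option R) (t : R) : Prop :=
  match o with None => True | Some a => t < a end.

Definition sig_upd (sg : V -> option R) (v : V) (t : R) (sg' : V -> option R) : Prop :=
  sg' v = Some t /\ forall x, x <> v -> sg' x = sg x.

Definition inQ (st : bstate) (v : V) : Prop :=
  exists j rec, In j (queue st) /\ nth_error (recs st) j = Some rec /\ rv rec = v.

(* e is in B = {(u,v,t) in E not traversed (at pop time), sigma_u <= t} *)
Definition inB (E : list edge) (trav0 : list edge) (u : V) (su : R) (e : edge) : Prop :=
  In e E /\ ~ In e trav0 /\ esrc e = u /\ su <= etime e.

Definition init_state (s : V) (ts : R) (sg0 : V -> option R) : bstate :=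
  mkState [mkRec s 0 ts None] [0%nat] [] sg0 Idle.

Definition init_sigma (s : V) (ts : R) (sg0 : V -> option R) : Prop :=
  sg0 s = Some ts /\ forall x, x <> s -> sg0 x = None.

Inductive bfs_step (E : list edge) : bstate -> bstate -> Prop :=
| step_pop : forall rs r q tr sg rec,
    nth_error rs r = Some rec ->
    bfs_step E (mkState rs (r :: q) tr sg Idle)
               (mkState rs q tr sg (Busy r (rv rec) (rd rec) (rt rec) tr []))
| step_finish : forall rs q tr sg r u du su tr0 dn,
    (forall e, inB E tr0 u su e -> In (edst e) dn) ->
    bfs_step E (mkState rs q tr sg (Busy r u du su tr0 dn))
               (mkState rs q tr sg Idle)
(* handling one target vertex v: e is the edge of B to v with smallest t *)
| step_case_i : forall rs q tr sg sg' r u du su tr0 dn e,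
    let st := mkState rs q tr sg (Busy r u du su tr0 dn) in
    ~ In (edst e) dn -> inB E tr0 u su e ->
    (forall e', inB E tr0 u su e' -> edst e' = edst e -> etime e <= etime e') ->
    ~ inQ st (edst e) -> sgt (sg (edst e)) (etime e) ->
    sig_upd sg (edst e) (etime e) sg' ->
    bfs_step E st
      (mkState (rs ++ [mkRec (edst e) (S du) (etime e) (Some r)])
               (q ++ [length rs]) (e :: tr) sg' (Busy r u du su tr0 (edst e :: dn)))
| step_case_ii : forall rs q tr sg sg' r u du su tr0 dn e j rec,
    let st := mkState rs q tr sg (Busy r u du su tr0 dn) in
    ~ In (edst e) dn -> inB E tr0 u su e ->
    (forall e', inB E tr0 u su e' -> edst e' = edst e -> etime e <= etime e') ->
    In j q -> nth_error rs j = Some rec -> rv rec = edst e -> rd rec = S du ->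
    sgt (sg (edst e)) (etime e) ->
    sig_upd sg (edst e) (etime e) sg' ->
    bfs_step E st
      (mkState (upd rs j (mkRec (edst e) (S du) (etime e) (Some r)))
               q (e :: tr) sg' (Busy r u du su tr0 (edst e :: dn)))
| step_case_iii : forall rs q tr sg sg' r u du su tr0 dn e,
    let st := mkState rs q tr sg (Busy r u du su tr0 dn) in
    ~ In (edst e) dn -> inB E tr0 u su e ->
    (forall e', inB E tr0 u su e' -> edst e' = edst e -> etime e <= etime e') ->
    inQ st (edst e) ->
    (forall j rec, In j q -> nth_error rs j = Some rec -> rv rec = edst e ->
                   rd rec <> S du) ->
    sgt (sg (edst e)) (etime e) ->
    sig_upd sg (edst e) (etime e) sg' ->
    bfs_step E st
      (mkState (rs ++ [mkRec (edst e) (S du) (etime e) (Some r)])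
               (q ++ [length rs]) (e :: tr) sg' (Busy r u du su tr0 (edst e :: dn)))
(* none of (i)-(iii) applies: sigma(v) <= t; e is only marked traversed *)
| step_none : forall rs q tr sg r u du su tr0 dn e,
    let st := mkState rs q tr sg (Busy r u du su tr0 dn) in
    ~ In (edst e) dn -> inB E tr0 u su e ->
    (forall e', inB E tr0 u su e' -> edst e' = edst e -> etime e <= etime e') ->
    ~ sgt (sg (edst e)) (etime e) ->
    bfs_step E st
      (mkState rs q (e :: tr) sg (Busy r u du su tr0 (edst e :: dn))).

Definition bfs_run (E : list edge) (s : V) (ts : R) (st : bstate) : Prop :=
  exists sg0, init_sigma s ts sg0 /\
    clos_refl_trans _ (bfs_step E) (init_state s ts sg0) st /\
    ph st = Idle /\ queue st = [].

End TBFS.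

Arguments esrc {V}. Arguments edst {V}. Arguments etime {V}.
Arguments temporal_path {V}. Arguments tend {V}. Arguments rv {V}.
Arguments rd {V}. Arguments rt {V}. Arguments rp {V}. Arguments recs {V}.
Arguments bfs_run {V}. Arguments temporal_graph {V}.

(* The proof is an invariant argument over the run of the BFS machine.
   The invariant [bfs_inv] has a phase-independent part [core_inv] on the
   records, the current values sigma and the traversed edges (every record
   is witnessed by a temporal path of at most its level hops ending at its
   time; two records of the same vertex have distinct levels, and the one
   of smaller level has the larger time; sigma(x) is the time of some
   record of x and a lower bound for all of them), and a phase-dependent
   part: records are created in nondecreasing level order, the queue is
   the suffix of the records that have not been popped yet, and every
   popped record is "finished": each edge leaving it no earlier than its
   time leads to a record of the next level no later than that edge.

   Cases (i), (ii) and (iii) of the algorithm are handled uniformly: each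
   writes a record at some index (fresh or overwritten) without ever
   worsening an existing record ([replaces], lemmas [core_relax] and
   [busy_relax]).  When the queue is empty every record is finished, so
   every temporal path is dominated by a record ([finished_dominates]);
   together with the path witnesses and the level/time invariants this
   gives the minimality statement [lemma13]. *)

From Stdlib Require Import Reals List Relations Lia Lra Classical.
Import ListNotations.
Open Scope R_scope.

Arguments mkRec {V}. Arguments mkState {V}. Arguments queue {V}. Arguments trav {V}.
Arguments sigma {V}. Arguments ph {V}. Arguments Busy {V}. Arguments Idle {V}.
Arguments chain {V}. Arguments inB {V}. Arguments inQ {V}. Arguments sig_upd {V}.
Arguments upd {V}. Arguments bfs_step {V}. Arguments init_state {V}. Arguments init_sigma {V}.

Lemma nth_error_snoc_other {A} (l : list A) x k :
  k <> length l -> nth_error (l ++ [x]) k = nth_error l k.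
Proof.
  intros Hk. destruct (Nat.lt_ge_cases k (length l)).
  - apply nth_error_app1; assumption.
  - rewrite (proj2 (nth_error_None l k)) by lia.
    apply nth_error_None. rewrite length_app. simpl. lia.
Qed.

Lemma upd_length V (l : list (brec V)) j r : length (upd l j r) = length l.
Proof. revert j; induction l; intros [|j]; simpl; auto. Qed.

Lemma upd_nth_neq V (l : list (brec V)) j r k :
  k <> j -> nth_error (upd l j r) k = nth_error l k.
Proof.
  revert j k; induction l as [|x l IH]; intros [|j] [|k] H; simpl; auto; lia.
Qed.

Lemma upd_nth_eq V (l : list (brec V)) j r :
  (j < length l)%nat -> nth_error (upd l j r) j = Some r.
Proof.
  revert j; induction l as [|x l IH]; intros [|j] H; simpl in *; auto; try lia.
  apply IH; lia.
Qed.

Section TemporalBFS.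
Variable V : Type.
Variable E : list (edge V).
Variable s : V.
Variable ts : R.

Definition recorded (rs : list (brec V)) (v : V) (L : nat) (T : R) : Prop :=
  exists j rj, nth_error rs j = Some rj /\ rv rj = v /\ (rd rj <= L)%nat /\ rt rj <= T.

Definition recorded_any (rs : list (brec V)) (v : V) (T : R) : Prop :=
  exists j rj, nth_error rs j = Some rj /\ rv rj = v /\ rt rj <= T.

Definition sigma_le (o : option R) (t : R) : Prop := exists a, o = Some a /\ a <= t.

Fixpoint endt (tp : R) (P : list (edge V)) : R :=
  match P with [] => tp | e :: P' => endt (etime e) P' end.

Definition path_within (v : V) (L : nat) (T : R) : Prop :=
  exists P, (forall e, In e P -> In e E) /\ chain s ts P v /\
            (length P <= L)%nat /\ endt ts P = T.

Definition finished (rs : list (brec V)) (a : nat) : Prop :=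
  forall j rj, (j < a)%nat -> nth_error rs j = Some rj ->
    forall e, In e E -> esrc e = rv rj -> rt rj <= etime e ->
    recorded rs (edst e) (S (rd rj)) (etime e).

Lemma recorded_any_recorded rs v T L :
  (forall j rj, nth_error rs j = Some rj -> (rd rj <= L)%nat) ->
  recorded_any rs v T -> recorded rs v L T.
Proof. intros Hb (j & rj & H1 & H2 & H3). exists j, rj. repeat split; eauto. Qed.

Lemma sigma_gt_le o t x : sgt o t -> sigma_le o x -> t < x.
Proof. intros H (a & -> & Ha). simpl in H. lra. Qed.

Lemma chain_snoc x tp P y e :
  chain x tp P y -> esrc e = y -> endt tp P <= etime e -> chain x tp (P ++ [e]) (edst e).
Proof.
  revert x tp; induction P as [|e0 P IH]; intros x tp H H1 H2; simpl in *.
  - subst. auto.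
  - destruct H as (G1 & G2 & G3). auto.
Qed.

Lemma endt_snoc tp P e : endt tp (P ++ [e]) = etime e.
Proof. revert tp; induction P; intros; simpl; auto. Qed.

Lemma endt_tend tp P : P <> [] -> endt tp P = tend P.
Proof.
  intros H. destruct P as [|e P]; [congruence|]. clear H. revert tp e.
  induction P as [|a P IH]; intros tp e; [reflexivity|].
  exact (IH (etime e) a).
Qed.

Lemma path_within_extend u du su e :
  path_within u du su -> In e E -> esrc e = u -> su <= etime e ->
  path_within (edst e) (S du) (etime e).
Proof.
  intros (P & HE & Hc & Hl & Ht) He Hs Hle. exists (P ++ [e]). repeat split.
  - intros e' H. apply in_app_or in H. destruct H as [H|[<-|[]]]; auto.
  - apply chain_snoc with u; auto. rewrite Ht. auto.
  - rewrite length_app. simpl. lia.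
  - apply endt_snoc.
Qed.

Lemma finished_dominates rs : finished rs (length rs) ->
  forall P x tp y L, recorded rs x L tp -> (forall e, In e P -> In e E) ->
  chain x tp P y -> recorded rs y (L + length P) (endt tp P).
Proof.
  intros Hf P. induction P as [|e P IH]; intros x tp y L Hx HE Hc; simpl in *.
  - subst. rewrite Nat.add_0_r. auto.
  - destruct Hc as (H1 & H2 & H3).
    destruct Hx as (j & rj & J1 & J2 & J3 & J4).
    assert (Hjl : (j < length rs)%nat) by (apply nth_error_Some; congruence).
    pose proof (Hf j rj Hjl J1 e (HE e (or_introl eq_refl)) ltac:(congruence) ltac:(lra))
      as (k & rk & K1 & K2 & K3 & K4).
    replace (L + S (length P))%nat with (S L + length P)%nat by lia.
    apply IH with (edst e); auto.
    exists k, rk. repeat split; auto; lia.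
Qed.

Definition replaces (rs rs' : list (brec V)) (j : nat) (N : brec V) : Prop :=
  nth_error rs' j = Some N /\
  (forall k, k <> j -> nth_error rs' k = nth_error rs k) /\
  (forall y, nth_error rs j = Some y -> rv y = rv N /\ rd y = rd N /\ rt N <= rt y).

Lemma replaces_snoc rs N : replaces rs (rs ++ [N]) (length rs) N.
Proof.
  split; [|split].
  - rewrite nth_error_app2, Nat.sub_diag by lia. reflexivity.
  - apply nth_error_snoc_other.
  - intros y H. rewrite (proj2 (nth_error_None rs (length rs))) in H by lia. discriminate.
Qed.

Lemma replaces_upd rs j y N : nth_error rs j = Some y ->
  rv y = rv N -> rd y = rd N -> rt N <= rt y -> replaces rs (upd rs j N) j N.
Proof.
  intros Hj H1 H2 H3. split; [|split].
  - apply upd_nth_eq, nth_error_Some. congruence.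
  - intros k Hk. apply upd_nth_neq; assumption.
  - intros y' Hy'. rewrite Hj in Hy'. injection Hy' as <-. auto.
Qed.

Lemma replaces_inv rs rs' j N k y : replaces rs rs' j N -> nth_error rs' k = Some y ->
  (k = j /\ y = N) \/ (k <> j /\ nth_error rs k = Some y).
Proof.
  intros (HN & Hother & _) Hk. destruct (Nat.eq_dec k j) as [->|Hne].
  - left. split; congruence.
  - right. rewrite Hother in Hk; auto.
Qed.

Lemma recorded_replaces rs rs' j N v L T :
  replaces rs rs' j N -> recorded rs v L T -> recorded rs' v L T.
Proof.
  intros (HN & Hother & Hold) (k & rk & H1 & H2 & H3 & H4).
  destruct (Nat.eq_dec k j) as [->|Hne].
  - destruct (Hold _ H1) as (G1 & G2 & G3). exists j, N.
    repeat split; auto; try congruence; lia || lra.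
  - exists k, rk. rewrite Hother by auto. auto.
Qed.

Lemma recorded_any_replaces rs rs' j N v T :
  replaces rs rs' j N -> recorded_any rs v T -> recorded_any rs' v T.
Proof.
  intros (HN & Hother & Hold) (k & rk & H1 & H2 & H3).
  destruct (Nat.eq_dec k j) as [->|Hne].
  - destruct (Hold _ H1) as (G1 & G2 & G3). exists j, N. repeat split; auto; try congruence; lra.
  - exists k, rk. rewrite Hother by auto. auto.
Qed.

Lemma finished_replaces rs rs' j N a :
  replaces rs rs' j N -> (a <= j)%nat -> finished rs a -> finished rs' a.
Proof.
  intros HR Ha Hf k rk Hk Hn e He Hs Ht. destruct HR as (HN & Hother & Hold).
  rewrite Hother in Hn by lia.
  eapply recorded_replaces; [split; eauto|]. exact (Hf k rk Hk Hn e He Hs Ht).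
Qed.

Record core_inv (rs : list (brec V)) (sg : V -> option R) (tr : list (edge V)) : Prop := {
  root_recorded : recorded rs s 0 ts;
  levels_sorted : forall j k rj rk, (j <= k)%nat -> nth_error rs j = Some rj ->
    nth_error rs k = Some rk -> (rd rj <= rd rk)%nat;
  sigma_lower : forall j rj, nth_error rs j = Some rj -> sigma_le (sg (rv rj)) (rt rj);
  sigma_attained : forall v a, sg v = Some a -> recorded_any rs v a;
  traversed_recorded : forall e, In e tr -> recorded_any rs (edst e) (etime e);
  levels_distinct : forall j k rj rk, j <> k -> nth_error rs j = Some rj ->
    nth_error rs k = Some rk -> rv rj = rv rk -> rd rj <> rd rk;
  times_decrease : forall j k rj rk, nth_error rs j = Some rj -> nth_error rs k = Some rk ->
    rv rj = rv rk -> (rd rj < rd rk)%nat -> rt rk < rt rj;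
  records_sound : forall j rj, nth_error rs j = Some rj -> path_within (rv rj) (rd rj) (rt rj)
}.

Record idle_inv (rs : list (brec V)) (q : list nat) (a : nat) : Prop := {
  idle_bound : (a <= length rs)%nat;
  idle_queue : q = seq a (length rs - a);
  idle_finished : finished rs a;
  idle_levels : forall j k rj rk, (a <= k)%nat -> nth_error rs j = Some rj ->
    nth_error rs k = Some rk -> (rd rj <= S (rd rk))%nat
}.

Record busy_inv (rs : list (brec V)) (q : list nat) (tr : list (edge V))
    (r : nat) (u : V) (du : nat) (su : R) (tr0 : list (edge V)) (dn : list V) : Prop := {
  busy_bound : (r < length rs)%nat;
  busy_queue : q = seq (S r) (length rs - S r);
  busy_popped : exists rr, nth_error rs r = Some rr /\ rv rr = u /\ rd rr = du /\ rt rr = su;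
  busy_finished : finished rs r;
  busy_levels : forall j rj, nth_error rs j = Some rj -> (rd rj <= S du)%nat;
  busy_snapshot : incl tr0 tr;
  busy_handled : forall v, In v dn -> forall e, inB E tr0 u su e -> edst e = v ->
    recorded rs v (S du) (etime e)
}.

Definition bfs_inv (st : bstate V) : Prop :=
  core_inv (recs st) (sigma st) (trav st) /\
  match ph st with
  | Idle => exists a, idle_inv (recs st) (queue st) a
  | Busy r u du su tr0 dn => busy_inv (recs st) (queue st) (trav st) r u du su tr0 dn
  end.

Lemma sigma_relax rs rs' sg sg' j N :
  (forall k y, nth_error rs k = Some y -> sigma_le (sg (rv y)) (rt y)) ->
  (forall v a, sg v = Some a -> recorded_any rs v a) ->
  replaces rs rs' j N -> sgt (sg (rv N)) (rt N) -> sig_upd sg (rv N) (rt N) sg' ->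
  (forall k y, nth_error rs' k = Some y -> sigma_le (sg' (rv y)) (rt y)) /\
  (forall v a, sg' v = Some a -> recorded_any rs' v a).
Proof.
  intros Hlow Hatt HR Hgt [Hs1 Hs2]. split.
  - intros k y Hk.
    destruct (replaces_inv _ _ _ _ _ _ HR Hk) as [[-> ->]|[_ Hk']].
    + rewrite Hs1. exists (rt N). split; auto; lra.
    + destruct (classic (rv y = rv N)) as [Hv|Hv].
      * rewrite Hv, Hs1. exists (rt N). split; auto.
        pose proof (Hlow _ _ Hk') as H. rewrite Hv in H. pose proof (sigma_gt_le _ _ _ Hgt H). lra.
      * rewrite Hs2 by auto. exact (Hlow _ _ Hk').
  - intros v a Ha. destruct (classic (v = rv N)) as [->|Hv].
    + rewrite Hs1 in Ha. injection Ha as <-. exists j, N. repeat split; auto; [apply HR | lra].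
    + rewrite Hs2 in Ha by auto. eapply recorded_any_replaces; eauto.
Qed.

Lemma core_relax rs rs' sg sg' tr r rr e j :
  core_inv rs sg tr -> nth_error rs r = Some rr ->
  (forall k y, nth_error rs k = Some y -> (rd y <= S (rd rr))%nat) ->
  In e E -> esrc e = rv rr -> rt rr <= etime e ->
  sgt (sg (edst e)) (etime e) -> sig_upd sg (edst e) (etime e) sg' ->
  replaces rs rs' j (mkRec (edst e) (S (rd rr)) (etime e) (Some r)) ->
  (forall k y, k <> j -> nth_error rs k = Some y -> rv y = edst e -> rd y <> S (rd rr)) ->
  (forall k y, (j <= k)%nat -> nth_error rs k = Some y -> (S (rd rr) <= rd y)%nat) ->
  core_inv rs' sg' (e :: tr).
Proof.
  intros HI Hrr Hbd He Hsrc Hle Hgt Hup HR Hnl Hge.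
  pose proof (sigma_relax _ _ _ _ _ _ (sigma_lower _ _ _ HI) (sigma_attained _ _ _ HI)
                HR Hgt Hup) as Hsig.
  set (N := mkRec (edst e) (S (rd rr)) (etime e) (Some r)) in *.
  assert (Hlater : forall k y, nth_error rs k = Some y -> rv y = edst e -> etime e < rt y).
  { intros k y Hk Hv. pose proof (sigma_lower _ _ _ HI k y Hk) as H. rewrite Hv in H.
    exact (sigma_gt_le _ _ _ Hgt H). }
  assert (HN : nth_error rs' j = Some N) by apply HR.
  constructor.
  - eapply recorded_replaces; [eauto | apply HI].
  - intros k1 k2 y1 y2 Hk Hy1 Hy2.
    destruct (replaces_inv _ _ _ _ _ _ HR Hy1) as [[-> ->]|[_ Hy1']];
    destruct (replaces_inv _ _ _ _ _ _ HR Hy2) as [[-> ->]|[_ Hy2']]; simpl.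
    + lia.
    + exact (Hge _ _ Hk Hy2').
    + exact (Hbd _ _ Hy1').
    + exact (levels_sorted _ _ _ HI _ _ _ _ Hk Hy1' Hy2').
  - exact (proj1 Hsig).
  - exact (proj2 Hsig).
  - intros e' [<-|He'].
    + exists j, N. simpl. repeat split; auto; lra.
    + eapply recorded_any_replaces; [eauto | exact (traversed_recorded _ _ _ HI _ He')].
  - intros k1 k2 y1 y2 Hk Hy1 Hy2 Hv.
    destruct (replaces_inv _ _ _ _ _ _ HR Hy1) as [[-> ->]|[Hne1 Hy1']];
    destruct (replaces_inv _ _ _ _ _ _ HR Hy2) as [[-> ->]|[Hne2 Hy2']]; simpl in *.
    + congruence.
    + intro H. exact (Hnl _ _ Hne2 Hy2' (eq_sym Hv) (eq_sym H)).
    + exact (Hnl _ _ Hne1 Hy1' Hv).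
    + exact (levels_distinct _ _ _ HI _ _ _ _ Hk Hy1' Hy2' Hv).
  - intros k1 k2 y1 y2 Hy1 Hy2 Hv Hlt.
    destruct (replaces_inv _ _ _ _ _ _ HR Hy1) as [[-> ->]|[_ Hy1']];
    destruct (replaces_inv _ _ _ _ _ _ HR Hy2) as [[-> ->]|[_ Hy2']]; simpl in *.
    + lia.
    + pose proof (Hbd _ _ Hy2'). lia.
    + exact (Hlater _ _ Hy1' Hv).
    + exact (times_decrease _ _ _ HI _ _ _ _ Hy1' Hy2' Hv Hlt).
  - intros k y Hk.
    destruct (replaces_inv _ _ _ _ _ _ HR Hk) as [[-> ->]|[_ Hk']]; simpl.
    + eapply path_within_extend; eauto. exact (records_sound _ _ _ HI _ _ Hrr).
    + exact (records_sound _ _ _ HI _ _ Hk').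
Qed.

Lemma busy_relax rs rs' q q' tr r u du su tr0 dn e j :
  busy_inv rs q tr r u du su tr0 dn ->
  replaces rs rs' j (mkRec (edst e) (S du) (etime e) (Some r)) ->
  (r < j)%nat -> (length rs <= length rs')%nat -> q' = seq (S r) (length rs' - S r) ->
  (forall e', inB E tr0 u su e' -> edst e' = edst e -> etime e <= etime e') ->
  busy_inv rs' q' (e :: tr) r u du su tr0 (edst e :: dn).
Proof.
  intros HB HR Hrj Hlen Hq Hmin.
  destruct HB as [Hbnd _ (rr & Hrr & Hru & Hrd & Hrt) Hfin Hbd Hsnap Hdone].
  pose proof HR as (HN & Hother & _).
  constructor; auto.
  - lia.
  - exists rr. rewrite Hother by lia. auto.
  - eapply finished_replaces; eauto. lia.
  - intros k y Hk. destruct (replaces_inv _ _ _ _ _ _ HR Hk) as [[-> ->]|[_ Hk']]; simpl; eauto.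
  - apply incl_tl. exact Hsnap.
  - intros v [<-|Hv] e' He' Hd.
    + exists j, (mkRec (edst e) (S du) (etime e) (Some r)). simpl. repeat split; auto.
    + eapply recorded_replaces; eauto.
Qed.

Lemma deeper_in_queue rs sg tr q r u du su tr0 dn j rj :
  core_inv rs sg tr -> busy_inv rs q tr r u du su tr0 dn ->
  nth_error rs j = Some rj -> rd rj = S du -> In j q.
Proof.
  intros HI HB Hj Hd. destruct HB as [_ -> (rr & Hrr & _ & Hrd & _) _ _ _ _].
  apply in_seq.
  assert (j < length rs)%nat by (apply nth_error_Some; congruence).
  destruct (Nat.le_gt_cases j r) as [Hjr|Hjr]; [|lia].
  pose proof (levels_sorted _ _ _ HI _ _ _ _ Hjr Hj Hrr). lia.
Qed.

Lemma inv_append rs q tr sg sg' r u du su tr0 dn e :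
  bfs_inv (mkState rs q tr sg (Busy r u du su tr0 dn)) ->
  inB E tr0 u su e ->
  (forall e', inB E tr0 u su e' -> edst e' = edst e -> etime e <= etime e') ->
  (forall j rj, nth_error rs j = Some rj -> rv rj = edst e -> rd rj <> S du) ->
  sgt (sg (edst e)) (etime e) -> sig_upd sg (edst e) (etime e) sg' ->
  bfs_inv (mkState (rs ++ [mkRec (edst e) (S du) (etime e) (Some r)]) (q ++ [length rs])
             (e :: tr) sg' (Busy r u du su tr0 (edst e :: dn))).
Proof.
  intros [HI HB] (He & _ & Hsrc & Hle) Hmin Hnl Hgt Hup. simpl in *.
  pose proof HB as [Hbnd Hq (rr & Hrr & <- & <- & <-) _ Hbd _ _].
  pose proof (replaces_snoc rs (mkRec (edst e) (S (rd rr)) (etime e) (Some r))) as HR.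
  split; simpl.
  - eapply core_relax; eauto.
    intros k y Hk Hy. rewrite (proj2 (nth_error_None rs k)) in Hy by lia. discriminate.
  - eapply busy_relax; eauto.
    + rewrite length_app. simpl. lia.
    + rewrite Hq, length_app. simpl.
      replace (length rs + 1 - S r)%nat with (S (length rs - S r)) by lia.
      rewrite seq_S. do 3 f_equal. lia.
Qed.

Lemma inv_update rs q tr sg sg' r u du su tr0 dn e j rec :
  bfs_inv (mkState rs q tr sg (Busy r u du su tr0 dn)) ->
  inB E tr0 u su e ->
  (forall e', inB E tr0 u su e' -> edst e' = edst e -> etime e <= etime e') ->
  In j q -> nth_error rs j = Some rec -> rv rec = edst e -> rd rec = S du ->
  sgt (sg (edst e)) (etime e) -> sig_upd sg (edst e) (etime e) sg' ->
  bfs_inv (mkState (upd rs j (mkRec (edst e) (S du) (etime e) (Some r))) q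
             (e :: tr) sg' (Busy r u du su tr0 (edst e :: dn))).
Proof.
  intros [HI HB] (He & _ & Hsrc & Hle) Hmin Hjq Hj Hjv Hjd Hgt Hup. simpl in *.
  pose proof HB as [Hbnd Hq (rr & Hrr & <- & <- & <-) _ Hbd _ _].
  assert (Hjr : (S r <= j)%nat) by (rewrite Hq in Hjq; apply in_seq in Hjq; lia).
  assert (Hearlier : etime e < rt rec).
  { pose proof (sigma_lower _ _ _ HI _ _ Hj) as H. rewrite Hjv in H.
    exact (sigma_gt_le _ _ _ Hgt H). }
  assert (HR : replaces rs (upd rs j (mkRec (edst e) (S (rd rr)) (etime e) (Some r))) j
                 (mkRec (edst e) (S (rd rr)) (etime e) (Some r)))
    by (eapply replaces_upd; simpl; eauto; lra).
  split; simpl.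
  - eapply core_relax; eauto.
    + intros k y Hk Hy Hv. rewrite <- Hjd.
      apply (levels_distinct _ _ _ HI _ _ _ _ Hk Hy Hj). congruence.
    + intros k y Hk Hy. rewrite <- Hjd. exact (levels_sorted _ _ _ HI _ _ _ _ Hk Hj Hy).
  - eapply busy_relax; eauto; rewrite upd_length; [lia | exact Hq].
Qed.

(* The edge is only marked traversed: sigma(v) <= t already records it. *)
Lemma inv_none rs q tr sg r u du su tr0 dn e :
  bfs_inv (mkState rs q tr sg (Busy r u du su tr0 dn)) ->
  (forall e', inB E tr0 u su e' -> edst e' = edst e -> etime e <= etime e') ->
  ~ sgt (sg (edst e)) (etime e) ->
  bfs_inv (mkState rs q (e :: tr) sg (Busy r u du su tr0 (edst e :: dn))).
Proof.
  intros [HI HB] Hmin Hgt. simpl in *.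
  assert (Hx : recorded_any rs (edst e) (etime e)).
  { destruct (sg (edst e)) as [a|] eqn:Ha; simpl in Hgt; [|tauto].
    destruct (sigma_attained _ _ _ HI _ _ Ha) as (k & y & H1 & H2 & H3).
    exists k, y. repeat split; auto. lra. }
  destruct HI as [Hroot Hsort Hlow Hatt Htr Hdist Hdec Hsound].
  destruct HB as [Hbnd Hq Hrr Hfin Hbd Hsnap Hdone].
  split; constructor; simpl; auto.
  - intros e' [<-|He']; auto.
  - apply incl_tl. exact Hsnap.
  - intros v [<-|Hv] e' He' Hd; auto.
    destruct Hx as (k & y & H1 & H2 & H3). exists k, y.
    repeat split; eauto. pose proof (Hmin e' He' Hd). lra.
Qed.

Lemma idle_pop rs r q tr a rec :
  idle_inv rs (r :: q) a -> nth_error rs r = Some rec ->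
  busy_inv rs q tr r (rv rec) (rd rec) (rt rec) tr [].
Proof.
  intros [Ha Hq Hfin Hbd] Hr.
  destruct (length rs - a)%nat as [|m] eqn:Hm; simpl in Hq; [discriminate|].
  injection Hq as <- ->.
  assert (Hal : (r < length rs)%nat) by (apply nth_error_Some; congruence).
  constructor; auto.
  - f_equal. lia.
  - exists rec. auto.
  - intros j rj Hj. exact (Hbd j r rj rec (le_n r) Hj Hr).
  - apply incl_refl.
  - intros v [].
Qed.

Lemma busy_finish rs sg tr q r u du su tr0 dn :
  core_inv rs sg tr -> busy_inv rs q tr r u du su tr0 dn ->
  (forall e, inB E tr0 u su e -> In (edst e) dn) -> idle_inv rs q (S r).
Proof.
  intros HI [Hbnd Hq (rr & Hrr & Hru & Hrd & Hrt) Hfin Hbd Hsnap Hdone] Hall.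
  constructor; auto.
  - intros j rj Hj Hn e He Hs Ht.
    destruct (Nat.eq_dec j r) as [->|Hne]; [|apply (Hfin j rj); auto; lia].
    rewrite Hrr in Hn. injection Hn as <-. rewrite Hrd.
    destruct (classic (In e tr0)) as [Hin|Hnin].
    + apply recorded_any_recorded; auto. exact (traversed_recorded _ _ _ HI _ (Hsnap _ Hin)).
    + assert (HBe : inB E tr0 u su e) by (repeat split; auto; congruence).
      exact (Hdone (edst e) (Hall e HBe) e HBe eq_refl).
  - intros j k rj rk Hk Hj Hk'.
    pose proof (levels_sorted _ _ _ HI r k rr rk ltac:(lia) Hrr Hk').
    pose proof (Hbd _ _ Hj). lia.
Qed.

Lemma inv_init sg0 : init_sigma s ts sg0 -> bfs_inv (init_state s ts sg0).
Proof.
  intros [H1 H2]. unfold bfs_inv, init_state; simpl.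
  set (root := mkRec s 0 ts None).
  assert (Hone : forall j rj, nth_error [root] j = Some rj -> j = 0%nat /\ rj = root).
  { intros [|[|j]] rj H; simpl in H; try discriminate. injection H. auto. }
  assert (Hpath : path_within s 0 ts).
  { exists []. simpl. repeat split; auto. intros e []. }
  split; [constructor | exists 0%nat; constructor].
  - exists 0%nat, root. simpl. repeat split; auto; lra.
  - intros j k rj rk _ Hj Hk. apply Hone in Hj as [_ ->], Hk as [_ ->]. lia.
  - intros j rj Hj. apply Hone in Hj as [_ ->]. exists ts. simpl. split; auto; lra.
  - intros v a Ha. destruct (classic (v = s)) as [->|Hne].
    + rewrite H1 in Ha. injection Ha as <-. exists 0%nat, root. simpl. repeat split; auto; lra.
    + rewrite H2 in Ha by auto. discriminate.
  - intros e [].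
  - intros j k rj rk Hjk Hj Hk. apply Hone in Hj, Hk. lia.
  - intros j k rj rk Hj Hk. apply Hone in Hj as [_ ->], Hk as [_ ->]. simpl. lia.
  - intros j rj Hj. apply Hone in Hj as [_ ->]. exact Hpath.
  - simpl. lia.
  - reflexivity.
  - intros j rj Hj. lia.
  - intros j k rj rk _ Hj Hk. apply Hone in Hj as [_ ->], Hk as [_ ->]. simpl. lia.
Qed.

Lemma inv_step st st' : bfs_step E st st' -> bfs_inv st -> bfs_inv st'.
Proof.
  intros H HI. destruct H.
  - destruct HI as [HI (a & Ha)]. split; [exact HI | eapply idle_pop; eauto].
  - destruct HI as [HI HB]. split; [exact HI | exists (S r)].
    exact (busy_finish _ _ _ _ _ _ _ _ _ _ HI HB H).
  - (* case (i): v is not queued, while every record of level du+1 is *)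
    unfold st in *. apply (inv_append rs q tr sg sg'); auto.
    intros j rj Hj Hv Hl. apply H2. exists j, rj. simpl. split; [|auto].
    destruct HI as [HI HB]. exact (deeper_in_queue _ _ _ _ _ _ _ _ _ _ _ _ HI HB Hj Hl).
  - unfold st in *. eapply inv_update; eauto.
  - (* case (iii): no queued record of v, hence no record at all, has level du+1 *)
    unfold st in *. apply (inv_append rs q tr sg sg'); auto.
    intros j rj Hj Hv Hl. apply (H3 j rj); auto.
    destruct HI as [HI HB]. exact (deeper_in_queue _ _ _ _ _ _ _ _ _ _ _ _ HI HB Hj Hl).
  - unfold st in *. apply inv_none; auto.
Qed.

Lemma inv_steps st st' : clos_refl_trans _ (bfs_step E) st st' -> bfs_inv st -> bfs_inv st'.
Proof. induction 1; auto. apply inv_step; assumption. Qed.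

Lemma bfs_final st : bfs_run E s ts st ->
  core_inv (recs st) (sigma st) (trav st) /\ finished (recs st) (length (recs st)).
Proof.
  intros (sg0 & Hinit & Hrt & Hph & Hq).
  pose proof (inv_steps _ _ Hrt (inv_init sg0 Hinit)) as HI.
  destruct HI as [HI Hidle]. rewrite Hph in Hidle. destruct Hidle as (a & [Ha Hqa Hfin _]).
  rewrite Hq in Hqa.
  replace (length (recs st)) with a; [split; auto|].
  destruct (length (recs st) - a)%nat eqn:Hm; simpl in Hqa; [lia|discriminate].
Qed.

End TemporalBFS.

Theorem lemma13 (V : Type) (E : list (edge V)) (s : V) (ts : R)
  (HG : temporal_graph E) (st : bstate V) (Hrun : bfs_run E s ts st)
  (i : nat) (vo : brec V) (Hvo : nth_error (recs st) i = Some vo)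
  (Hv : rv vo <> s) :
  is_min (fun tau => exists P, temporal_path E ts s (rv vo) P /\
                        (length P <= rd vo)%nat /\ tend P = tau)
         (rt vo).
Proof.
  destruct (bfs_final V E s ts st Hrun) as [HI Hfin].
  split.
  - (* the record's own path witness attains its time *)
    destruct (records_sound _ _ _ _ _ _ _ HI _ _ Hvo) as (P & HE & Hc & Hl & Ht).
    assert (HP : P <> []) by (intros ->; simpl in Hc; auto).
    exists P. repeat split; auto.
    rewrite <- Ht. symmetry. apply endt_tend; auto.
  - (* any such path is dominated by a record of rv vo of level <= rd vo *)
    intros x (P & (HP & HE & Hc) & Hl & <-).
    destruct (finished_dominates V E _ Hfin P s ts (rv vo) 0 (root_recorded _ _ _ _ _ _ _ HI) HE Hc)
      as (k & rk & K1 & K2 & K3 & K4).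
    rewrite (endt_tend V _ _ HP) in K4. simpl in K3.
    destruct (Nat.eq_dec k i) as [->|Hne].
    + rewrite Hvo in K1. injection K1 as ->. exact K4.
    + pose proof (levels_distinct _ _ _ _ _ _ _ HI k i rk vo Hne K1 Hvo K2).
      pose proof (times_decrease _ _ _ _ _ _ _ HI k i rk vo K1 Hvo K2 ltac:(lia)).
      lra.
Qed.
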